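(* Let $T$ be an AVL tree with $n$ nodes, let $a$ be its number of depth-0 nodes (leaves), $b$ its number of depth-1 nodes and $b_2$ its number of balanced depth-1 nodes, and set $\alpha=a/n$ and $\beta_2=b_2/b$. If $\alpha\le 0.4$, then \[\beta_2\le\frac{3\alpha-1}{1-\alpha}.\]
   Context: An AVL tree is a binary tree (each node has an optional left and an optional right child) such that at every node the heights of the left and right subtrees differ by at most $1$, where the height of a tree is the number of edges on a longest root-to-leaf path and the empty tree has height $-1$. The depth of a node is the height of the subtree rooted at that node. A node is balanced if its left and right subtrees have equal height, and unbalanced otherwise; thus a balanced depth-1 node has two leaf children and an unbalanced depth-1 node has exactly one (leaf) child. *)

From mathcomp Require Import all_boot all_order all_algebra.
Set Implicit Arguments. Unset Strict Implicit. Unset Printing Implicit Defensive.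
Import Order.TTheory GRing.Theory Num.Theory.

(* Binary trees: [Leaf] is the empty tree, [Node l r] a node with
   (optional, i.e. possibly empty) left and right subtrees. *)
Inductive tree : Type := Leaf | Node of tree & tree.

Fixpoint hgt (t : tree) : nat :=
  match t with Leaf => 0 | Node l r => (maxn (hgt l) (hgt r)).+1 end.

Definition height (t : tree) : int := (hgt t)%:Z - 1.

Fixpoint is_avl (t : tree) : bool :=
  match t with
  | Leaf => true
  | Node l r => [&& is_avl l, is_avl r & `|height l - height r| <= 1]%R
  end.

Fixpoint count_nodes (P : tree -> bool) (t : tree) : nat :=
  match t with
  | Leaf => 0
  | Node l r => P t + count_nodes P l + count_nodes P r
  end.

Definition is_node (t : tree) : bool := if t is Node _ _ then true else false.

(* depth of a node = height of its subtree *)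
Definition has_depth (d : int) (t : tree) : bool := is_node t && (height t == d).

Definition is_balanced (t : tree) : bool :=
  if t is Node l r then height l == height r else false.

Definition num_nodes (t : tree) : nat := count_nodes is_node t.
Definition num_depth0 (t : tree) : nat := count_nodes (has_depth 0) t.
Definition num_depth1 (t : tree) : nat := count_nodes (has_depth 1) t.
Definition num_bal_depth1 (t : tree) : nat :=
  count_nodes (fun s => has_depth 1 s && is_balanced s) t.

(* Every node of depth at least 2 in an AVL tree has two children, a balanced
   depth-1 node has two and an unbalanced one has one, so counting child
   pointers gives n + 1 + b2 = 2a + b.  The children of depth-1 nodes are
   distinct leaves, so b + b2 <= a.  With these two relations the claimed bound
   b2 (n - a) <= b (3a - n) becomes (b - b2)(a - b - b2) + b + b2 >= 0; the
   hypothesis alpha <= 0.4 is only needed to ensure alpha < 1. *)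
From mathcomp Require Import all_boot all_order all_algebra zify ring lra.
Import Order.TTheory GRing.Theory Num.Theory.

Set Implicit Arguments.
Unset Strict Implicit.
Unset Printing Implicit Defensive.

Lemma has_depth0E t : has_depth 0 t = (hgt t == 1).
Proof. by case: t => [|l r] //; rewrite /has_depth /height /=; lia. Qed.

Lemma has_depth1E t : has_depth 1 t = (hgt t == 2).
Proof. by case: t => [|l r] //; rewrite /has_depth /height /=; lia. Qed.

Lemma is_nodeE t : is_node t = (0 < hgt t).
Proof. by case: t. Qed.

Lemma avl_hgt_close l r :
  is_avl (Node l r) -> hgt l <= (hgt r).+1 /\ hgt r <= (hgt l).+1.
Proof. by case/and3P=> _ _; rewrite /height; lia. Qed.

Lemma hgt_le1 t : hgt t <= 1 -> t = Leaf \/ t = Node Leaf Leaf.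
Proof. by case: t => [|[|? ?] [|? ?]] /=; try lia; [left | right]. Qed.

Lemma count_nodes_le (P Q : pred tree) t :
  (forall s, P s -> Q s) -> count_nodes P t <= count_nodes Q t.
Proof.
move=> PQ; elim: t => [|l IHl r IHr] //=.
by rewrite !leq_add //; case: (P _) (PQ (Node l r)) => // ->.
Qed.

Lemma count_nodes_tall (P : pred tree) l r :
  (forall s, P s -> hgt s <= 2) -> 2 < hgt (Node l r) ->
  count_nodes P (Node l r) = count_nodes P l + count_nodes P r.
Proof.
move=> P_low tall; rewrite /=.
have /negbTE-> : ~~ P (Node l r) by apply: contraTN tall; rewrite -leqNgt; apply: P_low.
by rewrite add0n.
Qed.

Lemma num_depths_tall l r : 2 < hgt (Node l r) ->
  [/\ num_depth0 (Node l r) = num_depth0 l + num_depth0 r,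
      num_depth1 (Node l r) = num_depth1 l + num_depth1 r &
      num_bal_depth1 (Node l r) = num_bal_depth1 l + num_bal_depth1 r].
Proof.
move=> tall; have low1 s : has_depth 1 s -> hgt s <= 2.
  by rewrite has_depth1E => /eqP->.
split; apply: count_nodes_tall => // s; last by case/andP=> /low1.
by rewrite has_depth0E => /eqP->.
Qed.

Lemma num_bal_depth1_le t : num_bal_depth1 t <= num_depth1 t.
Proof. by apply: count_nodes_le => s /andP[]. Qed.

Lemma num_depth1_bal_le t : num_depth1 t + num_bal_depth1 t <= num_depth0 t.
Proof.
elim: t => [|l IHl r IHr] //.
case: (ltngtP (hgt (Node l r)) 2) => [low|tall|top].
- by have [-> | ->] : Node l r = Leaf \/ Node l r = Node Leaf Leaf by apply: hgt_le1.
- by case: (num_depths_tall tall) => -> -> ->; lia.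
- have [/hgt_le1[]-> /hgt_le1[]->] // : hgt l <= 1 /\ hgt r <= 1.
    by move: top => /=; lia.
Qed.

Lemma avl_num_nodes t : is_avl t -> is_node t ->
  num_nodes t + 1 + num_bal_depth1 t = 2 * num_depth0 t + num_depth1 t.
Proof.
elim: t => [|l IHl r IHr] // avl_lr _.
have [avl_l avl_r _] := and3P avl_lr; have [hlr hrl] := avl_hgt_close avl_lr.
case: (leqP (hgt (Node l r)) 2) => [low|tall].
- have [/hgt_le1[]-> /hgt_le1[]->] // : hgt l <= 1 /\ hgt r <= 1.
    by move: low => /=; lia.
- have [l_node r_node] : is_node l /\ is_node r by rewrite !is_nodeE; move: tall => /=; lia.
  case: (num_depths_tall tall) => -> -> ->.
  move: (IHl avl_l l_node) (IHr avl_r r_node); rewrite /num_nodes /=; lia.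
Qed.

Local Open Scope ring_scope.

Lemma balanced_ratio_le (R : realFieldType) (n a b c : R) :
  n + 1 + c = 2 * a + b -> b + c <= a -> 0 <= c <= b -> a < n ->
  c / b <= (3 * (a / n) - 1) / (1 - a / n).
Proof.
move=> count leaves /andP[c_ge0 c_le_b] a_lt_n.
have n_gt0 : 0 < n by lra.
have -> : (3 * (a / n) - 1) / (1 - a / n) = (3 * a - n) / (n - a).
  by field; lra.
have [b0 | b_gt0] := eqVneq b 0.
  by rewrite b0 invr0 mulr0 divr_ge0 //; lra.
have {}b_gt0 : 0 < b by rewrite lt_neqAle eq_sym b_gt0 (le_trans c_ge0).
rewrite ler_pdivrMr // mulrAC ler_pdivlMr ?subr_gt0 //.
have : 0 <= (b - c) * (a - b - c) by apply: mulr_ge0; lra.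
nra.
Qed.

Theorem lemma2 (T : tree) :
  is_avl T -> (0 < num_nodes T)%N ->
  (num_depth0 T)%:R / (num_nodes T)%:R <= 2%:R / 5%:R :> rat ->
  (num_bal_depth1 T)%:R / (num_depth1 T)%:R
    <= (3%:R * ((num_depth0 T)%:R / (num_nodes T)%:R) - 1)
       / (1 - (num_depth0 T)%:R / (num_nodes T)%:R) :> rat.
Proof.
move=> avl_T n_gt0 alpha_small.
have T_node : is_node T by case: T n_gt0 {avl_T alpha_small}.
apply: balanced_ratio_le.
- by rewrite -[1 in LHS]/(1%:R) -natrM -!natrD avl_num_nodes.
- by rewrite -natrD ler_nat num_depth1_bal_le.
- by rewrite ler0n ler_nat num_bal_depth1_le.
- have alpha_lt1 : (num_depth0 T)%:R / (num_nodes T)%:R < 1 :> rat.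
    exact: le_lt_trans alpha_small _.
  by rewrite ltr_pdivrMr ?ltr0n // mul1r in alpha_lt1.
Qed.
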